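(* Let $A_1,\dots,A_m$, $A$, $\gamma>0$, $M_\gamma$, $B_\gamma$ and $\sigma_\gamma$ be as follows: $A_j\in\mathbb{C}^{r_j\times n}$, $A=\begin{bmatrix}A_1\\ \vdots\\ A_m\end{bmatrix}$ has full row rank, $D_\gamma=\operatorname{diag}(\gamma I+A_1A_1^*,\dots,\gamma I+A_mA_m^* )$, $L$ is the strictly block lower triangular matrix with $(i,j)$ block $A_iA_j^*$ for $i>j$, $M_\gamma=(D_\gamma+L)^{-1}$, $B_\gamma=I-A^*M_\gamma A$, $R_\gamma=(D_{2\gamma})^{1/2}M_\gamma A$ (with $D_{2\gamma}$ being $D_\gamma$ with $\gamma$ replaced by $2\gamma$), and $\sigma_\gamma$ the smallest nonzero singular value of $R_\gamma$. For data vectors $p=(p_1,\dots,p_m)$ and $\tilde p=(\tilde p_1,\dots,\tilde p_m)$ (with $p_j,\tilde p_j\in\mathbb{C}^{r_j}$), let $q_\gamma^k$ and $\tilde q_\gamma^k$ denote the iterates of the regularized block Kaczmarz method with $q_\gamma^0=\tilde q_\gamma^0=0$: $$q_0=q_\gamma^k,\quad q_j=q_{j-1}+A_j^*(\gamma I+A_jA_j^* )^{-1}(p_j-A_jq_{j-1}),\ j=1,\dots,m,\quad q_\gamma^{k+1}=q_m,$$ (equivalently $q_\gamma^{k+1}=B_\gamma q_\gamma^k+A^*M_\gamma p$), and similarly for $\tilde q_\gamma^k$ with $\tilde p$ in place of $p$. Then for every $k\ge 1$, the error $e^k=\tilde q_\gamma^k-q_\gamma^k$ satisfies $$\|e^k\|\le\left[\frac{1-(1-\sigma_\gamma^2)^{k/2}}{1-(1-\sigma_\gamma^2)^{1/2}}\right]\big\|A^*M_\gamma(\tilde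 p-p)\big\|.$$
   Context: $A^*$ is the conjugate transpose; $\|\cdot\|$ is the Euclidean norm on vectors and the operator 2-norm on matrices; $(D_{2\gamma})^{1/2}$ is the Hermitian positive definite square root. One has $0<\sigma_\gamma\le 1$. *)

From HB Require Import structures.
From mathcomp Require Import all_boot all_order all_algebra.
From mathcomp Require Import complex.
Set Implicit Arguments. Unset Strict Implicit. Unset Printing Implicit Defensive.
Import Order.TTheory GRing.Theory Num.Theory.
Local Open Scope ring_scope.

(* Complex matrices are matrices over R[i] for a real closed field R
   (R = the reals gives the usual complex numbers). *)

Definition adjmx {R : rcfType} {p q : nat} (A : 'M[R[i]]_(p, q)) : 'M[R[i]]_(q, p) :=
  (map_mx (@conjc R) A)^T.

Definition vnorm {R : rcfType} {n : nat} (v : 'cV[R[i]]_n) : R :=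
  Num.sqrt (\sum_(i < n) (ComplexField.Normc.normc (v i 0)) ^+ 2).

Section Kaczmarz.
Variables (R : rcfType) (m n : nat) (r : 'I_m -> nat).
Variable (A : forall j : 'I_m, 'M[R[i]]_(r j, n)).

Definition Astack : 'M[R[i]]_(\sum_j r j, n) := \mxcol_j A j.

Definition Dmat (g : R) : 'M[R[i]]_(\sum_j r j) :=
  mxdiag (fun j => ((g%:C)%C)%:M + A j *m adjmx (A j)).

Definition Lmat : 'M[R[i]]_(\sum_j r j) :=
  \mxblock_(i, j) (if (j < i)%N then A i *m adjmx (A j) else 0).

Definition Mmat (g : R) : 'M[R[i]]_(\sum_j r j) := invmx (Dmat g + Lmat).

Definition kacz_step (g : R) (p : forall j : 'I_m, 'cV[R[i]]_(r j)) (q : 'cV[R[i]]_n)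
  : 'cV[R[i]]_n :=
  foldl (fun q' (j : 'I_m) =>
           q' + adjmx (A j) *m invmx (((g%:C)%C)%:M + A j *m adjmx (A j))
                  *m (p j - A j *m q'))
        q (enum 'I_m).

Definition kacz_iter (g : R) (p : forall j : 'I_m, 'cV[R[i]]_(r j)) (k : nat)
  : 'cV[R[i]]_n := iter k (kacz_step g p) 0.

End Kaczmarz.

Definition herm_pd {R : rcfType} {N : nat} (S : 'M[R[i]]_N) : Prop :=
  adjmx S = S /\
  forall v : 'cV[R[i]]_N, v != 0 -> ((adjmx v *m S *m v) 0 0) \is Num.pos.

Definition singular_value {R : rcfType} {p q : nat} (M : 'M[R[i]]_(p, q)) (s : R) : Prop :=
  0 <= s /\ eigenvalue (adjmx M *m M) ((s ^+ 2)%:C)%C.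

Definition min_nonzero_sv {R : rcfType} {p q : nat} (M : 'M[R[i]]_(p, q)) (s : R) : Prop :=
  [/\ 0 < s, singular_value M s & forall t, 0 < t -> singular_value M t -> s <= t].

From HB Require Import structures.
From mathcomp Require Import all_boot all_order all_algebra.
From mathcomp Require Import complex.
From mathcomp Require Import ring.
Import Order.TTheory GRing.Theory Num.Theory.
Local Open Scope ring_scope.

(* One sweep is the affine map q |-> B q + A^* M p with B = I - A^* M A, so the
   error satisfies e^(k+1) = B e^k + A^* M (p~ - p), e^0 = 0, and stays in the
   range of A^*.  For K = D_g + L one has K + K^* = D_2g + A A^*; expanding
   |B x|^2 with y = M A x, i.e. K y = A x, gives |B x|^2 = |x|^2 - |S y|^2 with
   S^2 = D_2g, that is |B x|^2 = |x|^2 - |R x|^2.  The range of A^* is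
   orthogonal to ker R, so there |R x| >= sigma |x| and B contracts by
   rho = sqrt (1 - sigma^2); summing, |e^k| <= (1 + rho + ... + rho^(k-1))
   |A^* M (p~ - p)|. *)

Section Adjoint.
Context {R : rcfType}.
Local Notation C := (R[i]).

Lemma conjcE (x : C) : conjc x = Num.conj x.
Proof.
have [->|nz] := eqVneq x 0; first by rewrite conjC0 conjc0.
by apply: (mulfI nz); rewrite -sqr_normc normCK.
Qed.

Lemma adjmxE p q (M : 'M[C]_(p, q)) : adjmx M = (map_mx Num.conj M)^T.
Proof. by rewrite /adjmx; congr (_^T); apply/matrixP => i j; rewrite !mxE conjcE. Qed.

Lemma adjmx_sesqui p q (M : 'M[C]_(p, q)) : (M ^t*)%sesqui = adjmx M.
Proof. by apply/matrixP => i j; rewrite !mxE conjcE. Qed.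

Lemma adjmx_mul p q s (M : 'M[C]_(p, q)) (N : 'M[C]_(q, s)) :
  adjmx (M *m N) = adjmx N *m adjmx M.
Proof. by rewrite !adjmxE map_mxM trmx_mul. Qed.

Lemma adjmxD p q (M N : 'M[C]_(p, q)) : adjmx (M + N) = adjmx M + adjmx N.
Proof. by apply/matrixP => i j; rewrite !adjmxE !mxE rmorphD. Qed.

Lemma adjmxN p q (M : 'M[C]_(p, q)) : adjmx (- M) = - adjmx M.
Proof. by apply/matrixP => i j; rewrite !adjmxE !mxE rmorphN. Qed.

Lemma adjmxZ p q (a : C) (M : 'M[C]_(p, q)) : adjmx (a *: M) = Num.conj a *: adjmx M.
Proof. by apply/matrixP => i j; rewrite !adjmxE !mxE rmorphM. Qed.

Lemma adjmxK p q (M : 'M[C]_(p, q)) : adjmx (adjmx M) = M.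
Proof. by apply/matrixP => i j; rewrite !adjmxE !mxE conjCK. Qed.

Lemma adjmx0 p q : adjmx (0 : 'M[C]_(p, q)) = 0.
Proof. by apply/matrixP => i j; rewrite !adjmxE !mxE conjC0. Qed.

Lemma adjmx_scalar p (a : C) : adjmx (a%:M : 'M[C]_p) = (Num.conj a)%:M.
Proof.
apply/matrixP => i j; rewrite !adjmxE !mxE eq_sym.
by case: eqP => _; rewrite ?mulr1n ?mulr0n ?conjC0.
Qed.

Lemma adjmx_mxblock p q (p_ : 'I_p -> nat) (q_ : 'I_q -> nat)
    (B_ : forall i j, 'M[C]_(p_ i, q_ j)) :
  adjmx (\mxblock_(i, j) B_ i j) = \mxblock_(i, j) adjmx (B_ j i).
Proof. by apply/matrixP => i j; rewrite !mxE. Qed.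

Lemma adjmx_mxcol p (p_ : 'I_p -> nat) l (B_ : forall i, 'M[C]_(p_ i, l)) :
  adjmx (\mxcol_i B_ i) = \mxrow_i adjmx (B_ i).
Proof. by apply/matrixP => i j; rewrite !mxE. Qed.

Lemma conjc_mul_normc (z : C) :
  conjc z * z = ((ComplexField.Normc.normc z) ^+ 2)%:C%C.
Proof.
case: z => a b /=; rewrite sqr_sqrtr ?addr_ge0 ?sqr_ge0 //.
rewrite -[((_ +i* _)%C * (_ +i* _)%C)]/(_ +i* _)%C.
by congr (Complex _ _); ring.
Qed.

End Adjoint.

Section InnerProduct.
Context {R : rcfType}.
Local Notation C := (R[i]).

Definition hdot {k} (u v : 'cV[C]_k) : C := (adjmx u *m v) 0 0.

Lemma hdotDr k (u v w : 'cV[C]_k) : hdot u (v + w) = hdot u v + hdot u w.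
Proof. by rewrite /hdot mulmxDr mxE. Qed.

Lemma hdotBr k (u v w : 'cV[C]_k) : hdot u (v - w) = hdot u v - hdot u w.
Proof. by rewrite /hdot mulmxBr !mxE. Qed.

Lemma hdotBl k (u v w : 'cV[C]_k) : hdot (u - v) w = hdot u w - hdot v w.
Proof. by rewrite /hdot adjmxD adjmxN mulmxDl mulNmx !mxE. Qed.

Lemma hdot0r k (u : 'cV[C]_k) : hdot u 0 = 0.
Proof. by rewrite /hdot mulmx0 mxE. Qed.

Lemma hdot0l k (u : 'cV[C]_k) : hdot 0 u = 0.
Proof. by rewrite /hdot adjmx0 mul0mx mxE. Qed.

Lemma hdotZr k (a : C) (u v : 'cV[C]_k) : hdot u (a *: v) = a * hdot u v.
Proof. by rewrite /hdot -scalemxAr mxE. Qed.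

Lemma hdot_mulmxr k l (X : 'M[C]_(k, l)) (u : 'cV[C]_k) (v : 'cV[C]_l) :
  hdot u (X *m v) = hdot (adjmx X *m u) v.
Proof. by rewrite /hdot adjmx_mul adjmxK mulmxA. Qed.

Lemma hdot_mulmxl k l (X : 'M[C]_(k, l)) (u : 'cV[C]_l) (v : 'cV[C]_k) :
  hdot (X *m u) v = hdot u (adjmx X *m v).
Proof. by rewrite hdot_mulmxr adjmxK. Qed.

Lemma hdot_dotmx k (u v : 'cV[C]_k) : hdot u v = dotmx v^T u^T.
Proof.
rewrite dotmxE /hdot !mxE; apply: eq_bigr => j _.
by rewrite !adjmxE !mxE mulrC.
Qed.

Lemma hdot_ge0 k (u : 'cV[C]_k) : 0 <= hdot u u.
Proof. by rewrite hdot_dotmx dnorm_ge0. Qed.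

Lemma hdot_eq0 k (u : 'cV[C]_k) : (hdot u u == 0) = (u == 0).
Proof.
rewrite hdot_dotmx dnorm_eq0; apply/eqP/eqP => [h|->]; last by rewrite trmx0.
by rewrite -[u]trmxK h trmx0.
Qed.

Lemma hdot_gt0 {k} {u : 'cV[C]_k} : u != 0 -> 0 < hdot u u.
Proof. by move=> u0; rewrite lt_def hdot_eq0 u0 hdot_ge0. Qed.

Lemma hdot_vnorm k (v : 'cV[C]_k) : hdot v v = ((vnorm v) ^+ 2)%:C%C.
Proof.
rewrite /vnorm sqr_sqrtr ?sumr_ge0 // => [|j _]; last exact: sqr_ge0.
rewrite /hdot mxE rmorph_sum /=; apply: eq_bigr => j _.
by rewrite /adjmx !mxE conjc_mul_normc.
Qed.

Lemma vnorm_ge0 k (v : 'cV[C]_k) : 0 <= vnorm v.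
Proof. exact: sqrtr_ge0. Qed.

Lemma vnorm0 k : vnorm (0 : 'cV[C]_k) = 0.
Proof.
by rewrite /vnorm big1 ?sqrtr0 // => j _; rewrite mxE /= expr0n addr0 sqrtr0 expr0n.
Qed.

Lemma vnormD k (u v : 'cV[C]_k) : vnorm (u + v) <= vnorm u + vnorm v.
Proof.
have := (triangle_lerif (@dotmx C k) u^T v^T).1.
have sqrtC_hdot (w : 'cV[C]_k) : sqrtC (hdot w w) = (vnorm w)%:C%C.
  by rewrite hdot_vnorm rmorphXn /= sqrCK // ler0c vnorm_ge0.
by rewrite -linearD /= -!hdot_dotmx !sqrtC_hdot -rmorphD /= lecR.
Qed.

Lemma ler_vnorm_sqr k l (u : 'cV[C]_k) (v : 'cV[C]_l) (a : R) : 0 <= a ->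
  vnorm u ^+ 2 <= a ^+ 2 * vnorm v ^+ 2 -> vnorm u <= a * vnorm v.
Proof.
move=> a0 h; rewrite -(@ler_pXn2r _ 2) ?nnegrE ?mulr_ge0 ?vnorm_ge0 //.
by rewrite exprMn.
Qed.

End InnerProduct.

Lemma unitmx_of_mulmx_inj (F : fieldType) k (K : 'M[F]_k) :
  (forall v : 'cV_k, K *m v = 0 -> v = 0) -> K \in unitmx.
Proof.
move=> Kinj; rewrite -unitmx_tr -row_free_unit -kermx_eq0.
apply/rowV0P => w /sub_kermxP wK.
have : K *m w^T = 0 by rewrite -[K]trmxK -trmx_mul wK trmx0.
by move/Kinj => w0; rewrite -[w]trmxK w0 trmx0.
Qed.

Section Units.
Context {R : rcfType}.
Local Notation C := (R[i]).

Lemma herm_pd_unit {k} {S : 'M[C]_k} : herm_pd S -> S \in unitmx.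
Proof.
move=> [_ Spos]; apply: unitmx_of_mulmx_inj => v Sv0; apply/eqP; apply: contraT.
by move/Spos; rewrite -mulmxA Sv0 mulmx0 mxE qualifE /= ltxx.
Qed.

Lemma regularized_gram_unit k l (X : 'M[C]_(k, l)) (g : R) : 0 < g ->
  (g%:C)%C%:M + X *m adjmx X \in unitmx.
Proof.
move=> g_gt0; apply: unitmx_of_mulmx_inj => v Gv0.
have : hdot v (((g%:C)%C%:M + X *m adjmx X) *m v) = 0 by rewrite Gv0 hdot0r.
rewrite mulmxDl hdotDr mul_scalar_mx hdotZr -mulmxA hdot_mulmxr.
move/eqP; rewrite paddr_eq0 ?mulr_ge0 ?hdot_ge0 ?ler0c ?ltW //.
have gC0 : (g%:C)%C != 0 :> C by rewrite gt_eqF // -[0]/((0 : R)%:C%C) ltcR.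
by rewrite mulf_eq0 (negPf gC0) hdot_eq0 => /andP [/eqP].
Qed.

End Units.

Section SingularValues.
Context {R : rcfType}.
Local Notation C := (R[i]).
Context {k l : nat} {X : 'M[C]_(k, l)} {sigma : R}.
Hypothesis X_sigma : min_nonzero_sv X sigma.

Lemma sqr_min_nonzero_sv_le_eigen (u : 'rV[C]_l) (lam : C) :
  u *m (adjmx X *m X) = lam *: u -> X *m adjmx u != 0 -> (sigma ^+ 2)%:C%C <= lam.
Proof.
case: X_sigma => sigma_gt0 _ sigma_min u_eigen Xu0; set z := adjmx u in Xu0.
have z0 : z != 0 by apply: contra_neq Xu0 => ->; rewrite mulmx0.
have u0 : u != 0 by apply: contra_neq z0 => u0; rewrite /z u0 adjmx0.
have gram_z : adjmx X *m X *m z = Num.conj lam *: z.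
  have gram_adj : adjmx (adjmx X *m X) = adjmx X *m X by rewrite adjmx_mul adjmxK.
  by rewrite /z -{1}gram_adj -adjmx_mul u_eigen adjmxZ.
have conj_lam_gt0 : 0 < Num.conj lam.
  rewrite -(pmulr_lgt0 _ (hdot_gt0 z0)) -hdotZr -gram_z -mulmxA -hdot_mulmxl.
  exact: hdot_gt0.
have lam_gt0 : 0 < lam by rewrite -[lam]conjCK geC0_conj // ltW.
have /complex_realP [a lam_a] := gtr0_real lam_gt0.
have a_gt0 : 0 < a by rewrite -ltcR -lam_a.
have sv_a : singular_value X (Num.sqrt a).
  split; first exact: sqrtr_ge0.
  by apply/eigenvalueP; exists u; rewrite // sqr_sqrtr ?ltW // -lam_a.
have sigma_le : sigma <= Num.sqrt a by apply: sigma_min sv_a; rewrite sqrtr_gt0.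
rewrite lam_a lecR -(sqr_sqrtr (ltW a_gt0)).
exact: lerXn2r (ltW sigma_gt0) (sqrtr_ge0 a) sigma_le.
Qed.

(* In an eigenbasis of X^* X, x only has components along eigenvectors not
   killed by X, whose eigenvalues are at least sigma^2. *)
Lemma min_nonzero_sv_lower_bound (x : 'cV[C]_l) :
  (forall z, X *m z = 0 -> hdot z x = 0) ->
  sigma ^+ 2 * vnorm x ^+ 2 <= vnorm (X *m x) ^+ 2.
Proof.
move=> x_perp_ker; rewrite -lecR rmorphM /= -!hdot_vnorm.
set H := adjmx X *m X.
have H_normal : H \is normalmx.
  by apply/normalmxP; rewrite adjmx_sesqui /H adjmx_mul adjmxK.
have /orthomx_spectralP H_spectral := H_normal.
set U := spectralmx H in H_spectral; set d := spectral_diag H in H_spectral.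
have U_unitary : U \is unitarymx := spectral_unitarymx H.
have adjU_U : adjmx U *m U = 1%:M.
  by apply: mulmx1C; rewrite -adjmx_sesqui; apply/unitarymxP.
have invU : invmx U = adjmx U by rewrite -adjmx_sesqui invmx_unitary.
have U_H : U *m H = diag_mx d *m U.
  by rewrite {1}H_spectral !mulmxA mulmxV ?spectral_unit // mul1mx.
set y := U *m x.
have hdot_y : hdot y y = \sum_i conjc (y i 0) * y i 0.
  by rewrite /hdot mxE; apply: eq_bigr => i _; rewrite !mxE.
have hdot_Xx : hdot (X *m x) (X *m x) = \sum_i d 0 i * (conjc (y i 0) * y i 0).
  rewrite hdot_mulmxl mulmxA -/H {1}H_spectral invU -!mulmxA hdot_mulmxr adjmxK.
  by rewrite -/y /hdot mxE; apply: eq_bigr => i _; rewrite mul_diag_mx !mxE; ring.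
have -> : hdot x x = hdot y y by rewrite /y hdot_mulmxl mulmxA adjU_U mul1mx.
rewrite hdot_y hdot_Xx mulr_sumr; apply: ler_sum => i _.
have [->|yi0] := eqVneq (y i 0) 0; first by rewrite !mulr0.
apply: ler_wpM2r; first by rewrite conjc_mul_normc ler0c sqr_ge0.
apply: (sqr_min_nonzero_sv_le_eigen (row i U)).
  by rewrite -row_mul U_H row_mul row_diag_mx -scalemxAl -rowE.
apply: contra_neq yi0 => /x_perp_ker <-.
by rewrite /hdot adjmxK /y -row_mul [RHS]mxE.
Qed.

End SingularValues.

Lemma le_geometric_sum (F : realDomainType) (rho b : F) (a : nat -> F) :
  0 <= rho -> a 0%N <= 0 -> (forall j, a j.+1 <= rho * a j + b) ->
  forall k, a k <= (\sum_(i < k) rho ^+ i) * b.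
Proof.
move=> rho_ge0 a0 a_rec; elim=> [|k IHk]; first by rewrite big_ord0 mul0r.
apply: (le_trans (a_rec k)).
rewrite big_ord_recl expr0 mulrDl mul1r [leRHS]addrC lerD2r.
under eq_bigr do rewrite lift0 exprS.
by rewrite -mulr_sumr -mulrA ler_wpM2l.
Qed.

Lemma geometric_sumE (F : fieldType) (rho : F) k : rho != 1 ->
  \sum_(i < k) rho ^+ i = (1 - rho ^+ k) / (1 - rho).
Proof.
move=> rho_neq1; have rho_sub1 : 1 - rho != 0 by rewrite subr_eq0 eq_sym.
apply: (mulIf rho_sub1); rewrite divfK // mulrC.
by rewrite -[1 - _ ^+ k]opprB subrX1 -mulNr opprB.
Qed.
Section Kaczmarz.
Context {R : rcfType} {m n : nat} {r : 'I_m -> nat}.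
Variable A : forall j : 'I_m, 'M[R[i]]_(r j, n).
Local Notation C := (R[i]).
Local Notation Aa := (Astack A).

Definition Bmat (g : R) : 'M[C]_n := 1%:M - adjmx Aa *m Mmat A g *m Aa.

Lemma Dmat_Lmat_add_adj g :
  Dmat A g + Lmat A + adjmx (Dmat A g + Lmat A) = Dmat A (2 * g) + Aa *m adjmx Aa.
Proof.
rewrite /Dmat /Lmat /Astack /mxdiag adjmx_mxcol mul_mxcol_mxrow.
rewrite adjmxD !adjmx_mxblock -!mxblockD; apply: eq_mxblock => i j.
have [<-|ij] := eqVneq i j.
  rewrite ltnn !conform_mx_id adjmx0 !addr0 !adjmxD adjmx_mul adjmxK adjmx_scalar.
  rewrite -conjcE conjc_real mulr_natl mulr2n.
  by rewrite rmorphD raddfD addrACA addrA.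
rewrite adjmx0 !add0r.
case: (ltngtP i j) => [_|_|/val_inj eij]; last by rewrite eij eqxx in ij.
  by rewrite ?adjmx0 ?addr0 ?add0r ?adjmx_mul ?adjmxK.
by rewrite ?adjmx0 ?addr0 ?add0r.
Qed.

Section Sweep.
Context {g : R}.
Variables (p : forall j : 'I_m, 'cV[C]_(r j)) (q : 'cV[C]_n).
Hypothesis g_gt0 : 0 < g.

Let W j := invmx ((g%:C)%C%:M + A j *m adjmx (A j)).
Let sweep_update q' (j : 'I_m) := q' + adjmx (A j) *m W j *m (p j - A j *m q').
Let partial_sweep k := foldl sweep_update q (take k (enum 'I_m)).
Let correction (j : 'I_m) := W j *m (p j - A j *m partial_sweep j).

Lemma partial_sweepE k : (k <= m)%N ->
  partial_sweep k = q + \sum_(j < m | (j < k)%N) adjmx (A j) *m correction j.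
Proof.
elim: k => [|k IHk] lt_k_m.
  by rewrite /partial_sweep take0 /= big_pred0 ?addr0 // => j; rewrite ltn0.
pose o := Ordinal lt_k_m.
rewrite /partial_sweep (take_nth o) ?size_enum_ord // foldl_rcons -/(partial_sweep k).
have -> : nth o (enum 'I_m) k = o by exact: (nth_ord_enum o o).
rewrite [in RHS](bigD1 o) // /sweep_update.
have -> : adjmx (A o) *m W o *m (p o - A o *m partial_sweep k) =
    adjmx (A o) *m correction o by rewrite -mulmxA.
rewrite (IHk (ltnW lt_k_m)) -addrA; congr (_ + _); rewrite addrC; congr (_ + _).
apply: eq_bigl => j; rewrite -(inj_eq val_inj) /= ltnS.
by case: (ltngtP j k).
Qed.

Lemma Dmat_Lmat_mul_corrections :
  (Dmat A g + Lmat A) *m \mxcol_j correction j = \mxcol_j p j - Aa *m q.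
Proof.
rewrite mulmxDl /Dmat mul_mxdiag_mxcol /Lmat mul_mxblock_mxrow /Astack mxcol_mul.
rewrite -mxcolB -mxcolD; apply: eq_mxcol => i.
rewrite {1}/correction mulKVmx ?regularized_gram_unit //.
rewrite (partial_sweepE _ (ltnW (ltn_ord i))) mulmxDr mulmx_sumr.
rewrite (big_mkcond (fun j : 'I_m => (j < i)%N)) /=.
have -> : \sum_(j < m) (if (j < i)%N then A i *m adjmx (A j) else 0) *m correction j =
          \sum_(j < m) (if (j < i)%N then A i *m (adjmx (A j) *m correction j) else 0).
  by apply: eq_bigr => j _; case: ifP; rewrite ?mul0mx // mulmxA.
by rewrite opprD addrA subrK.
Qed.

Lemma kacz_stepE : Dmat A g + Lmat A \in unitmx ->
  kacz_step A g p q = Bmat g *m q + adjmx Aa *m Mmat A g *m \mxcol_j p j.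
Proof.
move=> K_unit.
have corrections : \mxcol_j correction j = Mmat A g *m (\mxcol_j p j - Aa *m q).
  by rewrite /Mmat -Dmat_Lmat_mul_corrections mulKmx.
have -> : kacz_step A g p q = partial_sweep m.
  by rewrite /kacz_step -[enum 'I_m]take_size size_enum_ord.
rewrite partial_sweepE //.
have -> : \sum_(j < m | (j < m)%N) adjmx (A j) *m correction j =
    adjmx Aa *m \mxcol_j correction j.
  by rewrite /Astack adjmx_mxcol mul_mxrow_mxcol; apply: eq_bigl => j; rewrite ltn_ord.
rewrite corrections /Bmat !mulmxBr mulmxBl mul1mx !mulmxA.
by rewrite addrA addrAC.
Qed.

End Sweep.

Lemma Bmat_mul_adjmx g (w : 'cV[C]_(\sum_j r j)) :
  Bmat g *m (adjmx Aa *m w) = adjmx Aa *m (w - Mmat A g *m (Aa *m (adjmx Aa *m w))).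
Proof. by rewrite /Bmat mulmxBl mul1mx mulmxBr -!mulmxA. Qed.

Section Error.
Context {g : R}.
Variables (p pt : forall j : 'I_m, 'cV[C]_(r j)).
Hypotheses (g_gt0 : 0 < g) (K_unit : Dmat A g + Lmat A \in unitmx).

Let e k := kacz_iter A g pt k - kacz_iter A g p k.

Lemma kacz_iter_subS k :
  e k.+1 = Bmat g *m e k + adjmx Aa *m Mmat A g *m \mxcol_j (pt j - p j).
Proof. by rewrite /e /kacz_iter !iterS !kacz_stepE // mxcolB !mulmxBr opprD addrACA. Qed.

Lemma kacz_iter_sub_range k : exists w, e k = adjmx Aa *m w.
Proof.
elim: k => [|k [w ew]]; first by exists 0; rewrite /e /kacz_iter subrr mulmx0.
by rewrite kacz_iter_subS ew Bmat_mul_adjmx -mulmxA -mulmxDr; eexists.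
Qed.

End Error.

Section Contraction.
Context {g : R} {S : 'M[C]_(\sum_j r j)}.
Hypotheses (S_herm : herm_pd S) (SS : S *m S = Dmat A (2 * g)).

Lemma Dmat_Lmat_unit : Dmat A g + Lmat A \in unitmx.
Proof.
apply: unitmx_of_mulmx_inj => v Kv0; set K := Dmat A g + Lmat A in Kv0.
have : hdot v ((K + adjmx K) *m v) = 0.
  by rewrite mulmxDl hdotDr Kv0 hdot0r hdot_mulmxr adjmxK Kv0 hdot0l addr0.
have hdot_SS : hdot v (S *m S *m v) = hdot (S *m v) (S *m v).
  by rewrite -mulmxA hdot_mulmxr S_herm.1.
have hdot_AA : hdot v (Aa *m adjmx Aa *m v) = hdot (adjmx Aa *m v) (adjmx Aa *m v).
  by rewrite -mulmxA hdot_mulmxr.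
rewrite Dmat_Lmat_add_adj -SS mulmxDl hdotDr hdot_SS hdot_AA.
move/eqP; rewrite paddr_eq0 ?hdot_ge0 // hdot_eq0 => /andP [/eqP Sv0 _].
apply/eqP; apply: contraT => /S_herm.2.
by rewrite -mulmxA Sv0 mulmx0 mxE qualifE /= ltxx.
Qed.

Lemma vnorm_Bmat_sqr x :
  vnorm (Bmat g *m x) ^+ 2 = vnorm x ^+ 2 - vnorm (S *m Mmat A g *m Aa *m x) ^+ 2.
Proof.
apply: complexI; rewrite rmorphB /= -!hdot_vnorm.
set K := Dmat A g + Lmat A; set y := Mmat A g *m (Aa *m x).
have Ky : K *m y = Aa *m x by rewrite /y /Mmat mulKVmx ?Dmat_Lmat_unit.
have -> : S *m Mmat A g *m Aa *m x = S *m y by rewrite /y !mulmxA.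
have -> : Bmat g *m x = x - adjmx Aa *m y by rewrite /Bmat mulmxBl mul1mx -!mulmxA.
have hdot_x_y : hdot x (adjmx Aa *m y) = hdot y (adjmx K *m y).
  by rewrite hdot_mulmxr adjmxK -Ky hdot_mulmxl.
have hdot_y_x : hdot (adjmx Aa *m y) x = hdot y (K *m y).
  by rewrite hdot_mulmxl adjmxK Ky.
have hdot_y_y : hdot (adjmx Aa *m y) (adjmx Aa *m y) = hdot y (Aa *m adjmx Aa *m y).
  by rewrite hdot_mulmxl adjmxK mulmxA.
have hdot_Sy : hdot (S *m y) (S *m y) =
    hdot y (K *m y) + hdot y (adjmx K *m y) - hdot y (Aa *m adjmx Aa *m y).
  rewrite hdot_mulmxl S_herm.1 mulmxA SS -hdotDr -mulmxDl Dmat_Lmat_add_adj.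
  by rewrite mulmxDl hdotDr addrK.
by rewrite hdotBl !hdotBr hdot_x_y hdot_y_x hdot_y_y hdot_Sy; ring.
Qed.

Lemma hdot_ker_adjmx z w :
  S *m Mmat A g *m Aa *m z = 0 -> hdot z (adjmx Aa *m w) = 0.
Proof.
rewrite -!mulmxA => SMAz0.
have MAz0 : Mmat A g *m (Aa *m z) = 0.
  by rewrite -(mulKmx (herm_pd_unit S_herm) (Mmat A g *m (Aa *m z))) SMAz0 mulmx0.
have Az0 : Aa *m z = 0.
  by rewrite -(mulKVmx Dmat_Lmat_unit (Aa *m z)) -/(Mmat A g) MAz0 mulmx0.
by rewrite hdot_mulmxr adjmxK Az0 hdot0l.
Qed.

Lemma vnorm_Bmat_adjmx_le sigma w :
  min_nonzero_sv (S *m Mmat A g *m Aa) sigma ->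
  vnorm (Bmat g *m (adjmx Aa *m w)) <=
    Num.sqrt (1 - sigma ^+ 2) * vnorm (adjmx Aa *m w).
Proof.
move=> R_sigma; apply: ler_vnorm_sqr; first exact: sqrtr_ge0.
have sqr_sqrt_ge : 1 - sigma ^+ 2 <= Num.sqrt (1 - sigma ^+ 2) ^+ 2.
  have [le0|lt0] := lerP 0 (1 - sigma ^+ 2); first by rewrite sqr_sqrtr.
  by rewrite ltr0_sqrtr // expr0n ltW.
apply: le_trans (ler_wpM2r (sqr_ge0 _) sqr_sqrt_ge).
rewrite vnorm_Bmat_sqr mulrBl mul1r lerD2l lerN2.
by apply: (min_nonzero_sv_lower_bound R_sigma) => z /hdot_ker_adjmx.
Qed.

End Contraction.

End Kaczmarz.

Theorem theorem3p2 (R : rcfType) (m n : nat) (r : 'I_m -> nat)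
    (A : forall j : 'I_m, 'M[R[i]]_(r j, n)) (gamma : R)
    (p pt : forall j : 'I_m, 'cV[R[i]]_(r j))
    (S : 'M[R[i]]_(\sum_j r j)) (sigma : R) :
  0 < gamma ->
  row_free (Astack A) ->
  herm_pd S -> S *m S = Dmat A (2 * gamma) ->
  min_nonzero_sv (S *m Mmat A gamma *m Astack A) sigma ->
  forall k : nat, (1 <= k)%N ->
  vnorm (kacz_iter A gamma pt k - kacz_iter A gamma p k)
    <= (1 - Num.sqrt (1 - sigma ^+ 2) ^+ k) / (1 - Num.sqrt (1 - sigma ^+ 2))
       * vnorm (adjmx (Astack A) *m Mmat A gamma *m \mxcol_j (pt j - p j)).
Proof.
move=> gamma_gt0 _ S_herm SS R_sigma k _.
have K_unit := Dmat_Lmat_unit A S_herm SS.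
have sigma_gt0 : 0 < sigma by case: R_sigma.
have rho_lt1 : Num.sqrt (1 - sigma ^+ 2) < 1.
  by rewrite -{2}sqrtr1 ltr_sqrt ?ltr01 // gtrBl exprn_gt0.
rewrite -geometric_sumE ?lt_eqF //.
apply: (@le_geometric_sum _ _ _ (fun j =>
  vnorm (kacz_iter A gamma pt j - kacz_iter A gamma p j))) => [||j].
- exact: sqrtr_ge0.
- by rewrite /kacz_iter subrr vnorm0.
rewrite kacz_iter_subS //; have [w ->] := kacz_iter_sub_range A p pt gamma_gt0 K_unit j.
apply: le_trans (vnormD _ _ _) _; rewrite lerD2r.
exact: vnorm_Bmat_adjmx_le S_herm SS _ _ R_sigma.
Qed.
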